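(* Let $(X,d^X)$ be a graph with bounded geometry that is roughly isometric to a Cayley graph $(G,S,d^S)$ of a group of polynomial volume growth, via a rough isometry $\phi:X\to G$. Then there exist a group $G'$ with a finite symmetric generating set $S'$, of polynomial volume growth with the same homogeneous dimension as $G$, and an injective rough isometry $\phi':X\to (G',d^{S'})$.
   Context: Graphs are connected, locally finite, without self-loops or multiple edges; $d^X$ is the path-length metric. Bounded geometry: $\deg x\leq\Delta$ for all vertices $x$ and some $\Delta>0$. For a group $G$ with finite symmetric generating set $S$, the Cayley graph has $x\sim y$ iff $x=ys$ for some $s\in S$, with word metric $d^S$. $G$ has polynomial volume growth if $|\{x:d^S(e,x)\leq n\}|\leq Cn^A$ for some $C,A>0$ and all $n\geq1$; the homogeneous dimension is the integer $D$ with $C_1n^D\leq|\{x:d^S(e,x)\leq n\}|\leq C_2n^D$ for all $n\geq 1$. A map $\phi:X\to Y$ of metric spaces is an $(a,b)$-rough isometry ($a\geq1,b\geq0$) if $a^{-1}d^X(x,y)-b\leq d^Y(\phi(x),\phi(y))\leq a\,d^X(x,y)+b$ for all $x,y\in X$ and $d^Y(z,\phi(X))\leq b$ for all $z\in Y$; a rough isometry is an $(a,b)$-rough isometry for some $a,b$. *)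

From Stdlib Require Import Reals Lra List ZArith ClassicalEpsilon.
Open Scope R_scope.

Inductive walk {V : Type} (adj : V -> V -> Prop) : nat -> V -> V -> Prop :=
| walk0 : forall x, walk adj 0 x x
| walkS : forall n x y z, adj x y -> walk adj n y z -> walk adj (S n) x z.

Definition is_min_walk_length {V : Type} (adj : V -> V -> Prop) (x y : V) (n : nat) : Prop :=
  walk adj n x y /\ forall m, walk adj m x y -> (n <= m)%nat.

(* path-length metric (meaningful when the graph is connected) *)
Definition gdist {V : Type} (adj : V -> V -> Prop) (x y : V) : nat :=
  epsilon (inhabits 0%nat) (is_min_walk_length adj x y).

Definition symmetric_rel {V : Type} (adj : V -> V -> Prop) : Prop :=
  forall x y, adj x y -> adj y x.

Definition no_self_loops {V : Type} (adj : V -> V -> Prop) : Prop :=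
  forall x, ~ adj x x.

Definition connected {V : Type} (adj : V -> V -> Prop) : Prop :=
  forall x y, exists n, walk adj n x y.

Definition deg_le {V : Type} (adj : V -> V -> Prop) (x : V) (Delta : nat) : Prop :=
  exists l : list V, (length l <= Delta)%nat /\ forall y, adj x y -> In y l.

Definition locally_finite {V : Type} (adj : V -> V -> Prop) : Prop :=
  forall x, exists Delta, deg_le adj x Delta.

Definition bounded_geometry {V : Type} (adj : V -> V -> Prop) : Prop :=
  exists Delta : nat, (0 < Delta)%nat /\ forall x, deg_le adj x Delta.

(* A graph in the sense of the paper: connected, locally finite,
   no self-loops (edges are a symmetric relation, so no multiple edges). *)
Definition is_graph {V : Type} (adj : V -> V -> Prop) : Prop :=
  symmetric_rel adj /\ no_self_loops adj /\ connected adj /\ locally_finite adj.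

Definition rough_isometry_ab {X Y : Type} (dX : X -> X -> nat) (dY : Y -> Y -> nat)
  (phi : X -> Y) (a b : R) : Prop :=
  1 <= a /\ 0 <= b /\
  (forall x y, / a * INR (dX x y) - b <= INR (dY (phi x) (phi y)) /\
               INR (dY (phi x) (phi y)) <= a * INR (dX x y) + b) /\
  (* d^Y(z, phi(X)) <= b ; the infimum of a nat-valued function is attained *)
  (forall z : Y, exists x : X, INR (dY z (phi x)) <= b).

Definition rough_isometry {X Y : Type} (dX : X -> X -> nat) (dY : Y -> Y -> nat)
  (phi : X -> Y) : Prop :=
  exists a b, rough_isometry_ab dX dY phi a b.

Record group := Group {
  gcar :> Type;
  gmul : gcar -> gcar -> gcar;
  ginv : gcar -> gcar;
  gone : gcar;
  gmulA : forall x y z, gmul x (gmul y z) = gmul (gmul x y) z;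
  gmul1l : forall x, gmul gone x = x;
  gmul1r : forall x, gmul x gone = x;
  gmulVl : forall x, gmul (ginv x) x = gone;
  gmulVr : forall x, gmul x (ginv x) = gone
}.

Definition symmetric_set {G : group} (S : list G) : Prop :=
  forall s, In s S -> In (ginv G s) S.

Definition word_prod {G : group} (l : list G) : G :=
  fold_right (gmul G) (gone G) l.

Definition generates {G : group} (S : list G) : Prop :=
  forall g : G, exists l : list G, (forall s, In s l -> In s S) /\ g = word_prod l.

Definition fin_sym_gen_set {G : group} (S : list G) : Prop :=
  symmetric_set S /\ generates S.

Definition cayley_adj {G : group} (S : list G) (x y : G) : Prop :=
  exists s, In s S /\ x = gmul G y s.

Definition word_dist {G : group} (S : list G) : G -> G -> nat :=
  gdist (cayley_adj S).

Definition ball_card_le {G : group} (S : list G) (n : nat) (c : R) : Prop :=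
  forall l : list G, NoDup l -> (forall x, In x l -> (word_dist S (gone G) x <= n)%nat) ->
    INR (length l) <= c.

Definition ball_card_ge {G : group} (S : list G) (n : nat) (c : R) : Prop :=
  exists l : list G, NoDup l /\ (forall x, In x l -> (word_dist S (gone G) x <= n)%nat) /\
    c <= INR (length l).

Definition polynomial_growth {G : group} (S : list G) : Prop :=
  exists C A : R, 0 < C /\ 0 < A /\
    forall n : nat, (1 <= n)%nat -> ball_card_le S n (C * Rpower (INR n) A).

Definition homogeneous_dimension {G : group} (S : list G) (D : Z) : Prop :=
  exists C1 C2 : R, 0 < C1 /\ 0 < C2 /\
    forall n : nat, (1 <= n)%nat ->
      ball_card_ge S n (C1 * powerRZ (INR n) D) /\
      ball_card_le S n (C2 * powerRZ (INR n) D).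

From Stdlib Require Import Reals List ZArith Lia Lra Classical ClassicalEpsilon Wf_nat.

(* A rough isometry has fibres of uniformly bounded diameter, hence, by bounded
   geometry, of cardinality at most some N.  Replace G by G x Z/(N+1), generated
   by S x {0} together with {e} x Z/(N+1): its word distance differs from the
   word distance of the first coordinates by at most 1, and its balls are at most
   N+1 times larger than those of G, so growth and homogeneous dimension are
   unchanged.  Labelling each fibre of phi injectively by Z/(N+1) turns
   x |-> (phi x, label x) into an injective rough isometry. *)

Section PathMetric.
Context {V : Type} (adj : V -> V -> Prop).

Lemma gdist_spec x y :
  (exists n, walk adj n x y) -> is_min_walk_length adj x y (gdist adj x y).
Proof.
  intro Hwalk.
  destruct (dec_inh_nat_subset_has_unique_least_element (fun n => walk adj n x y)
              (fun n => classic _) Hwalk) as [n [[Hn Hmin] _]].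
  unfold gdist. apply epsilon_spec. exists n. split; assumption.
Qed.

Lemma gdist_le x y n : walk adj n x y -> (gdist adj x y <= n)%nat.
Proof. intro W. exact (proj2 (gdist_spec x y (ex_intro _ n W)) n W). Qed.

Lemma walk_gdist x y : (exists n, walk adj n x y) -> walk adj (gdist adj x y) x y.
Proof. intro Hwalk. exact (proj1 (gdist_spec x y Hwalk)). Qed.

Lemma gdist_refl x : gdist adj x x = 0%nat.
Proof. pose proof (gdist_le x x 0 (walk0 adj x)). lia. Qed.

End PathMetric.

Section FiniteBalls.
Context {V : Type} (adj : V -> V -> Prop).

Fixpoint ball_list (nb : V -> list V) (r : nat) (x : V) : list V :=
  match r with
  | O => x :: nil
  | S r => x :: flat_map (ball_list nb r) (nb x)
  end.

Fixpoint ball_size_bound (Delta r : nat) : nat :=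
  match r with O => 1 | S r => 1 + Delta * ball_size_bound Delta r end.

Lemma length_flat_map_le {A B : Type} (f : A -> list B) m l :
  (forall x, (length (f x) <= m)%nat) -> (length (flat_map f l) <= length l * m)%nat.
Proof.
  intro Hf. induction l as [|x l IH]; simpl; [lia|].
  rewrite length_app. specialize (Hf x). lia.
Qed.

Lemma ball_list_length nb Delta :
  (forall x, (length (nb x) <= Delta)%nat) ->
  forall r x, (length (ball_list nb r x) <= ball_size_bound Delta r)%nat.
Proof.
  intros Hnb r. induction r as [|r IH]; intro x; simpl; [lia|].
  pose proof (length_flat_map_le (ball_list nb r) _ (nb x) IH).
  pose proof (Nat.mul_le_mono_r _ _ (ball_size_bound Delta r) (Hnb x)). lia.
Qed.

Lemma walk_in_ball_list nb :
  (forall x y, adj x y -> In y (nb x)) ->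
  forall n x y, walk adj n x y -> forall r, (n <= r)%nat -> In y (ball_list nb r x).
Proof.
  intros Hnb n x y W. induction W as [x|n x y z Hxy W IH]; intros r Hr.
  - destruct r; left; reflexivity.
  - destruct r as [|r]; [lia|]. right. apply in_flat_map.
    exists y. split; [apply Hnb; exact Hxy | apply IH; lia].
Qed.

Lemma bounded_geometry_balls :
  bounded_geometry adj -> forall r, exists (N : nat) (ball : V -> list V),
    forall x, (length (ball x) <= N)%nat /\
              forall n y, walk adj n x y -> (n <= r)%nat -> In y (ball x).
Proof.
  intros [Delta [_ Hdeg]] r.
  set (nb := fun x => epsilon (inhabits nil)
               (fun l => (length l <= Delta)%nat /\ forall y, adj x y -> In y l)).
  assert (Hnb : forall x, (length (nb x) <= Delta)%nat /\ forall y, adj x y -> In y (nb x))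
    by (intro x; apply epsilon_spec, Hdeg).
  exists (ball_size_bound Delta r), (ball_list nb r). intro x. split.
  - exact (ball_list_length nb Delta (fun x => proj1 (Hnb x)) r x).
  - intros n y W Hn. exact (walk_in_ball_list nb (fun x => proj2 (Hnb x)) n x y W r Hn).
Qed.

End FiniteBalls.

Section RoughIsometry.
Context {X Y : Type} (dX : X -> X -> nat) (dY : Y -> Y -> nat).

Lemma rough_isometry_ab_fibre_dist (phi : X -> Y) a b x y :
  rough_isometry_ab dX dY phi a b -> dY (phi x) (phi x) = 0%nat ->
  phi x = phi y -> INR (dX x y) <= a * b.
Proof.
  intros [Ha [_ [Hd _]]] Hrefl Hxy.
  destruct (Hd x y) as [Hlow _]. rewrite <- Hxy, Hrefl in Hlow. simpl in Hlow.
  apply Rmult_le_compat_l with (r := a) in Hlow; [|lra].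
  rewrite Rmult_minus_distr_l, <- Rmult_assoc, Rinv_r, Rmult_1_l in Hlow; lra.
Qed.

Lemma rough_isometry_ab_lift {Z : Type} (dZ : Z -> Z -> nat)
    (phi : X -> Y) (psi : X -> Z) (pi : Z -> Y) a b (c : nat) :
  rough_isometry_ab dX dY phi a b ->
  (forall x, pi (psi x) = phi x) ->
  (forall z w, (dY (pi z) (pi w) <= dZ z w <= dY (pi z) (pi w) + c)%nat) ->
  rough_isometry_ab dX dZ psi a (b + INR c).
Proof.
  intros [Ha [Hb [Hd Hcov]]] Hpi Hclose.
  assert (Hclose_R : forall z w, INR (dY (pi z) (pi w)) <= INR (dZ z w) <=
                                 INR (dY (pi z) (pi w)) + INR c).
  { intros z w. rewrite <- plus_INR. split; apply le_INR, Hclose. }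
  pose proof (pos_INR c).
  split; [exact Ha|]. split; [lra|]. split.
  - intros x y. specialize (Hclose_R (psi x) (psi y)). rewrite !Hpi in Hclose_R.
    specialize (Hd x y). lra.
  - intro z. destruct (Hcov (pi z)) as [x Hx]. exists x.
    specialize (Hclose_R z (psi x)). rewrite Hpi in Hclose_R. lra.
Qed.

End RoughIsometry.

Lemma rough_isometry_ab_bounded_fibres {X Y : Type} (adj : X -> X -> Prop)
    (dY : Y -> Y -> nat) (phi : X -> Y) a b :
  connected adj -> bounded_geometry adj -> (forall y, dY y y = 0%nat) ->
  rough_isometry_ab (gdist adj) dY phi a b ->
  exists (N : nat) (ball : X -> list X),
    (forall x, (length (ball x) <= N)%nat) /\ (forall x y, phi x = phi y -> In y (ball x)).
Proof.
  intros Hconn Hbg Hrefl Hphi.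
  destruct (archimed (a * b)) as [Hup _].
  destruct (bounded_geometry_balls adj Hbg (Z.to_nat (up (a * b)))) as [N [ball Hball]].
  exists N, ball. split; [intro x; apply Hball|].
  intros x y Hxy. apply (proj2 (Hball x) (gdist adj x y)); [apply walk_gdist, Hconn|].
  pose proof (rough_isometry_ab_fibre_dist _ _ phi a b x y Hphi (Hrefl _) Hxy) as Hdist.
  assert (Hup_nonneg : (0 <= up (a * b))%Z)
    by (pose proof (pos_INR (gdist adj x y)); apply le_IZR; lra).
  apply INR_le. rewrite (INR_IZR_INZ (Z.to_nat _)), Z2Nat.id by exact Hup_nonneg. lra.
Qed.

Fixpoint index_of {V : Type} (x : V) (l : list V) : nat :=
  match l with
  | nil => 0
  | y :: l => if excluded_middle_informative (x = y) then 0 else S (index_of x l)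
  end.

Lemma index_of_lt {V : Type} (x : V) l : In x l -> (index_of x l < length l)%nat.
Proof.
  induction l as [|y l IH]; simpl; [tauto|].
  destruct (excluded_middle_informative (x = y)); [lia|].
  intros [-> | Hx]; [congruence | specialize (IH Hx); lia].
Qed.

Lemma nth_index_of {V : Type} (x d : V) l : In x l -> nth (index_of x l) l d = x.
Proof.
  induction l as [|y l IH]; simpl; [tauto|].
  destruct (excluded_middle_informative (x = y)); [congruence|].
  intros [-> | Hx]; [congruence | auto].
Qed.

(* Each fibre is enumerated inside the list attached to one chosen representative. *)
Lemma fibre_labelling {X Y : Type} (f : X -> Y) (N : nat) (ball : X -> list X) :
  (forall x, (length (ball x) <= N)%nat) -> (forall x y, f x = f y -> In y (ball x)) ->
  exists label : X -> nat, (forall x, (label x < N)%nat) /\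
    (forall x y, f x = f y -> label x = label y -> x = y).
Proof.
  intros Hlen Hfib.
  destruct (classic (inhabited X)) as [[x0] | Hempty];
    [| exists (fun _ => 0%nat); split; intro x; exfalso; exact (Hempty (inhabits x))].
  set (rep := fun x => epsilon (inhabits x0) (fun z => f z = f x)).
  assert (Hrep : forall x, f (rep x) = f x)
    by (intro x; exact (epsilon_spec (inhabits x0) (fun z => f z = f x) (ex_intro _ x eq_refl))).
  assert (Hin : forall x, In x (ball (rep x))) by (intro x; apply Hfib, Hrep).
  exists (fun x => index_of x (ball (rep x))). split.
  - intro x. pose proof (index_of_lt _ _ (Hin x)). specialize (Hlen (rep x)). lia.
  - intros x y Hxy Hlabel.
    assert (Hrep_xy : rep x = rep y) by (unfold rep; rewrite Hxy; reflexivity).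
    rewrite <- (nth_index_of x x0 _ (Hin x)), <- (nth_index_of y x0 _ (Hin y)).
    rewrite Hlabel, Hrep_xy. reflexivity.
Qed.

Section CayleyGraph.
Variable G : group.

Lemma ginv1 : ginv G (gone G) = gone G.
Proof. rewrite <- (gmul1r G (ginv G (gone G))). apply gmulVl. Qed.

Lemma gmulKV (x y : G) : gmul G x (gmul G (ginv G x) y) = y.
Proof. rewrite gmulA, gmulVr, gmul1l. reflexivity. Qed.

Variable S : list G.
Hypothesis HS : fin_sym_gen_set S.

Lemma walk_lmul c n x y : walk (cayley_adj S) n x y ->
  walk (cayley_adj S) n (gmul G c x) (gmul G c y).
Proof.
  induction 1 as [|n x y z [s [Hs ->]] W IH]; [constructor|].
  apply walkS with (gmul G c y); [exists s; split; [exact Hs | apply gmulA] | exact IH].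
Qed.

Lemma walk_word_prod l : (forall s, In s l -> In s S) ->
  walk (cayley_adj S) (length l) (gone G) (word_prod l).
Proof.
  induction l as [|s l IH]; intro Hl; [constructor|].
  apply walkS with s.
  - exists (ginv G s). split; [apply (proj1 HS), Hl; left; reflexivity|].
    symmetry. apply gmulVr.
  - rewrite <- (gmul1r G s) at 1. apply walk_lmul, IH. intros t Ht. apply Hl. right. exact Ht.
Qed.

Lemma cayley_connected : connected (cayley_adj S).
Proof.
  intros x y. destruct (proj2 HS (gmul G (ginv G x) y)) as [l [Hl Heq]].
  exists (length l). rewrite <- (gmul1r G x) at 1. rewrite <- (gmulKV x y), Heq.
  apply walk_lmul, walk_word_prod, Hl.
Qed.

Lemma walk_word_dist x y : walk (cayley_adj S) (word_dist S x y) x y.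
Proof. apply walk_gdist, cayley_connected. Qed.

End CayleyGraph.

(* Z/(n+1), indexed by n so that no positivity hypothesis on the order is needed. *)
Section CyclicGroup.
Variable n : nat.

Definition zmod := {k : nat | Nat.ltb k (S n) = true}.

Lemma zmod_val_inj (x y : zmod) : proj1_sig x = proj1_sig y -> x = y.
Proof.
  destruct x as [x px], y as [y py]; simpl; intros <-.
  f_equal. apply Eqdep_dec.UIP_dec, Bool.bool_dec.
Qed.

Lemma zmod_val_lt (x : zmod) : (proj1_sig x < S n)%nat.
Proof. destruct x as [x px]. apply Nat.ltb_lt, px. Qed.

Definition zmod_of_nat (k : nat) : zmod :=
  exist _ (k mod S n) (proj2 (Nat.ltb_lt _ _) (Nat.mod_upper_bound k (S n) (Nat.neq_succ_0 n))).

Lemma zmod_of_nat_val k : proj1_sig (zmod_of_nat k) = (k mod S n)%nat.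
Proof. reflexivity. Qed.

Lemma zmod_of_nat_mod k l : (k mod S n = l mod S n)%nat -> zmod_of_nat k = zmod_of_nat l.
Proof. intro Hkl. apply zmod_val_inj. exact Hkl. Qed.

Lemma zmod_of_nat_inj k l : (k < S n)%nat -> (l < S n)%nat ->
  zmod_of_nat k = zmod_of_nat l -> k = l.
Proof.
  intros Hk Hl Hkl. apply (f_equal (@proj1_sig _ _)) in Hkl.
  rewrite !zmod_of_nat_val, !Nat.mod_small in Hkl by assumption. exact Hkl.
Qed.

Lemma zmod_of_nat_val_id (x : zmod) : zmod_of_nat (proj1_sig x) = x.
Proof. apply zmod_val_inj. apply Nat.mod_small, zmod_val_lt. Qed.

Definition zmod_add (x y : zmod) := zmod_of_nat (proj1_sig x + proj1_sig y).
Definition zmod_opp (x : zmod) := zmod_of_nat (S n - proj1_sig x).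
Definition zmod_zero := zmod_of_nat 0.

Lemma zmod_addA x y z : zmod_add x (zmod_add y z) = zmod_add (zmod_add x y) z.
Proof.
  unfold zmod_add. apply zmod_of_nat_mod. rewrite !zmod_of_nat_val.
  rewrite Nat.Div0.add_mod_idemp_r, Nat.Div0.add_mod_idemp_l, Nat.add_assoc. reflexivity.
Qed.

Lemma zmod_add0l x : zmod_add zmod_zero x = x.
Proof.
  unfold zmod_add, zmod_zero. rewrite zmod_of_nat_val, Nat.Div0.mod_0_l, Nat.add_0_l.
  apply zmod_of_nat_val_id.
Qed.

Lemma zmod_add0r x : zmod_add x zmod_zero = x.
Proof.
  unfold zmod_add, zmod_zero. rewrite zmod_of_nat_val, Nat.Div0.mod_0_l, Nat.add_0_r.
  apply zmod_of_nat_val_id.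
Qed.

Lemma zmod_addNl x : zmod_add (zmod_opp x) x = zmod_zero.
Proof.
  unfold zmod_add, zmod_opp, zmod_zero. apply zmod_of_nat_mod.
  rewrite zmod_of_nat_val, Nat.Div0.add_mod_idemp_l.
  pose proof (zmod_val_lt x). rewrite Nat.sub_add by lia.
  rewrite Nat.Div0.mod_same, Nat.Div0.mod_0_l. reflexivity.
Qed.

Lemma zmod_addNr x : zmod_add x (zmod_opp x) = zmod_zero.
Proof.
  unfold zmod_add, zmod_opp, zmod_zero. apply zmod_of_nat_mod.
  rewrite zmod_of_nat_val, Nat.Div0.add_mod_idemp_r.
  pose proof (zmod_val_lt x). rewrite Nat.add_comm, Nat.sub_add by lia.
  rewrite Nat.Div0.mod_same, Nat.Div0.mod_0_l. reflexivity.
Qed.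

Definition cyclic_group : group :=
  Group zmod zmod_add zmod_opp zmod_zero
        zmod_addA zmod_add0l zmod_add0r zmod_addNl zmod_addNr.

Definition zmod_enum : list zmod := map zmod_of_nat (seq 0 (S n)).

Lemma in_zmod_enum x : In x zmod_enum.
Proof.
  rewrite <- (zmod_of_nat_val_id x). apply in_map, in_seq.
  pose proof (zmod_val_lt x). lia.
Qed.

End CyclicGroup.

Section ProductGroup.
Variables G H : group.

Definition prod_mul (x y : G * H) : G * H := (gmul G (fst x) (fst y), gmul H (snd x) (snd y)).
Definition prod_inv (x : G * H) : G * H := (ginv G (fst x), ginv H (snd x)).
Definition prod_one : G * H := (gone G, gone H).

Lemma prod_mulA x y z : prod_mul x (prod_mul y z) = prod_mul (prod_mul x y) z.
Proof. unfold prod_mul; simpl. rewrite !gmulA. reflexivity. Qed.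

Lemma prod_mul1l x : prod_mul prod_one x = x.
Proof. destruct x; unfold prod_mul; simpl. rewrite !gmul1l. reflexivity. Qed.

Lemma prod_mul1r x : prod_mul x prod_one = x.
Proof. destruct x; unfold prod_mul; simpl. rewrite !gmul1r. reflexivity. Qed.

Lemma prod_mulVl x : prod_mul (prod_inv x) x = prod_one.
Proof. destruct x; unfold prod_mul; simpl. rewrite !gmulVl. reflexivity. Qed.

Lemma prod_mulVr x : prod_mul x (prod_inv x) = prod_one.
Proof. destruct x; unfold prod_mul; simpl. rewrite !gmulVr. reflexivity. Qed.

Definition prod_group : group :=
  Group (G * H)%type prod_mul prod_inv prod_one
        prod_mulA prod_mul1l prod_mul1r prod_mulVl prod_mulVr.

Lemma prod_mul_pair g1 h1 g2 h2 :
  gmul prod_group (g1, h1) (g2, h2) = (gmul G g1 g2, gmul H h1 h2).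
Proof. reflexivity. Qed.

End ProductGroup.

Lemma card_prod_le {A B : Type} (P : A -> Prop) (c : R) (hs : list B) :
  (forall l : list A, NoDup l -> (forall x, In x l -> P x) -> INR (length l) <= c) ->
  forall l : list (A * B), NoDup l -> (forall p, In p l -> P (fst p) /\ In (snd p) hs) ->
  INR (length l) <= INR (length hs) * c.
Proof.
  intro Hc. induction hs as [|h hs IH]; intros l Hnd Hl.
  - destruct l as [|p l]; [simpl; lra|]. destruct (Hl p (or_introl eq_refl)) as [_ []].
  - set (at_h := fun p : A * B => if excluded_middle_informative (snd p = h) then true else false).
    assert (Hat_h : forall p, at_h p = true <-> snd p = h).
    { intro p. unfold at_h. destruct (excluded_middle_informative (snd p = h)); split; congruence. }
    rewrite <- (filter_length at_h l).
    assert (Hfibre : INR (length (filter at_h l)) <= c).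
    { assert (Hpair : map (fun a => (a, h)) (map fst (filter at_h l)) = filter at_h l).
      { rewrite map_map, <- map_id. apply map_ext_in.
        intros [a b] Hp. apply filter_In, proj2, Hat_h in Hp. simpl in Hp. subst. reflexivity. }
      rewrite <- (length_map fst). apply Hc.
      - apply (NoDup_map_inv (fun a => (a, h))). rewrite Hpair. apply NoDup_filter, Hnd.
      - intros x Hx. apply in_map_iff in Hx. destruct Hx as [p [<- Hp]].
        apply (Hl p), (filter_In at_h p l), Hp. }
    assert (Hrest : INR (length (filter (fun p => negb (at_h p)) l)) <= INR (length hs) * c).
    { apply IH; [apply NoDup_filter, Hnd|].
      intros p Hp. apply filter_In in Hp. destruct Hp as [Hp Hneq].
      destruct (Hl p Hp) as [HP [Hh | Hin]]; split; auto.
      exfalso. apply Bool.negb_true_iff in Hneq. rewrite (proj2 (Hat_h p) (eq_sym Hh)) in Hneq.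
      discriminate. }
    rewrite plus_INR. simpl length. rewrite S_INR. lra.
Qed.

Section FiniteExtension.
Variables G H : group.
Variable S : list G.
Hypothesis HS : fin_sym_gen_set S.
Variable hs : list H.
Hypothesis in_hs : forall h, In h hs.

Local Notation GH := (prod_group G H).

Definition ext_gens : list GH :=
  map (fun s => (s, gone H)) S ++ map (fun h => (gone G, h)) hs.

Lemma in_ext_gens_horizontal s : In s S -> In ((s, gone H) : GH) ext_gens.
Proof. intro Hs. apply in_or_app. left. exact (in_map (fun s => ((s, gone H) : GH)) S s Hs). Qed.

Lemma in_ext_gens_vertical h : In ((gone G, h) : GH) ext_gens.
Proof. apply in_or_app. right. exact (in_map (fun h => ((gone G, h) : GH)) hs h (in_hs h)). Qed.

Lemma word_prod_horizontal l :
  word_prod (map (fun s => ((s, gone H) : GH)) l) = ((word_prod l, gone H) : GH).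
Proof.
  induction l as [|s l IH]; [reflexivity|].
  transitivity (prod_mul G H (s, gone H) (word_prod l, gone H)); [exact (f_equal _ IH)|].
  unfold prod_mul. simpl. rewrite gmul1l. reflexivity.
Qed.

Lemma ext_gens_fin_sym_gen_set : fin_sym_gen_set ext_gens.
Proof.
  split.
  - intros s' Hs. apply in_app_or in Hs.
    destruct Hs as [Hs|Hs]; apply in_map_iff in Hs; destruct Hs as [x [<- Hx]];
      simpl; unfold prod_inv; simpl.
    + rewrite ginv1. apply in_ext_gens_horizontal, (proj1 HS), Hx.
    + rewrite ginv1. apply in_ext_gens_vertical.
  - intros [g h]. destruct (proj2 HS g) as [l [Hl ->]].
    exists ((gone G, h) :: map (fun s => ((s, gone H) : GH)) l). split.
    + intros s [<- | Hs]; [apply in_ext_gens_vertical|].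
      apply in_map_iff in Hs. destruct Hs as [x [<- Hx]]. apply in_ext_gens_horizontal, Hl, Hx.
    + simpl. rewrite word_prod_horizontal. unfold prod_mul. simpl.
      rewrite gmul1l, gmul1r. reflexivity.
Qed.

Lemma walk_horizontal n g1 g2 h : walk (cayley_adj S) n g1 g2 ->
  walk (cayley_adj ext_gens) n ((g1, h) : GH) (g2, h).
Proof.
  induction 1 as [|n x y z [s [Hs ->]] W IH]; [constructor|].
  apply walkS with ((y, h) : GH); [|exact IH].
  exists (s, gone H). split; [apply in_ext_gens_horizontal, Hs|].
  rewrite prod_mul_pair, gmul1r. reflexivity.
Qed.

Lemma cayley_adj_vertical g h1 h2 : cayley_adj ext_gens ((g, h1) : GH) (g, h2).
Proof.
  exists (gone G, gmul H (ginv H h2) h1). split; [apply in_ext_gens_vertical|].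
  rewrite prod_mul_pair, gmul1r, gmulKV. reflexivity.
Qed.

(* Vertical generators do not move the first coordinate. *)
Lemma walk_fst n (x y : GH) : walk (cayley_adj ext_gens) n x y ->
  exists m, (m <= n)%nat /\ walk (cayley_adj S) m (fst x) (fst y).
Proof.
  induction 1 as [x|n x y z [s [Hs ->]] W [m [Hm Wm]]]; [exists 0%nat; split; constructor|].
  apply in_app_or in Hs.
  destruct Hs as [Hs|Hs]; apply in_map_iff in Hs; destruct Hs as [t [<- Ht]].
  - exists (m + 1)%nat. split; [lia|]. rewrite Nat.add_1_r. apply walkS with (fst y); [exists t; split; auto | exact Wm].
  - exists m. split; [lia|]. simpl. rewrite gmul1r. exact Wm.
Qed.

Lemma word_dist_fst_le (x y : GH) : (word_dist S (fst x) (fst y) <= word_dist ext_gens x y)%nat.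
Proof.
  pose proof (walk_word_dist _ _ ext_gens_fin_sym_gen_set x y) as W.
  destruct (walk_fst _ _ _ W) as [m [Hm Wm]].
  pose proof (gdist_le _ _ _ _ Wm). unfold word_dist in *. lia.
Qed.

Lemma word_dist_horizontal_le g1 g2 h :
  (word_dist ext_gens ((g1, h) : GH) (g2, h) <= word_dist S g1 g2)%nat.
Proof. apply gdist_le, walk_horizontal, walk_word_dist, HS. Qed.

Lemma word_dist_le_fst_succ (x y : GH) :
  (word_dist ext_gens x y <= word_dist S (fst x) (fst y) + 1)%nat.
Proof.
  destruct x as [g1 h1], y as [g2 h2]. rewrite Nat.add_1_r. apply gdist_le.
  apply walkS with ((g1, h2) : GH); [apply cayley_adj_vertical|].
  apply walk_horizontal, walk_word_dist, HS.
Qed.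

Lemma ball_card_le_ext n c :
  ball_card_le S n c -> ball_card_le ext_gens n (INR (length hs) * c).
Proof.
  intros Hc l Hnd Hl. apply (card_prod_le (fun g => (word_dist S (gone G) g <= n)%nat)); auto.
  intros p Hp. split; [|apply in_hs].
  pose proof (word_dist_fst_le (gone GH) p). specialize (Hl p Hp). simpl in *. lia.
Qed.

Lemma NoDup_horizontal (l : list G) : NoDup l -> NoDup (map (fun g => ((g, gone H) : GH)) l).
Proof.
  intro Hnd. apply NoDup_map_NoDup_ForallPairs; [|exact Hnd].
  intros x y _ _ Hxy. injection Hxy as Hxy. exact Hxy.
Qed.

Lemma in_ball_horizontal n (l : list G) :
  (forall g, In g l -> (word_dist S (gone G) g <= n)%nat) ->
  forall p, In p (map (fun g => ((g, gone H) : GH)) l) -> (word_dist ext_gens (gone GH) p <= n)%nat.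
Proof.
  intros Hl p Hp. apply in_map_iff in Hp. destruct Hp as [g [<- Hg]].
  pose proof (word_dist_horizontal_le (gone G) g (gone H)). specialize (Hl g Hg). change (gone GH) with ((gone G, gone H) : GH). lia.
Qed.

Lemma ball_card_le_of_ext n c : ball_card_le ext_gens n c -> ball_card_le S n c.
Proof.
  intros Hc l Hnd Hl. rewrite <- (length_map (fun g => ((g, gone H) : GH))).
  apply Hc; [apply NoDup_horizontal, Hnd | apply in_ball_horizontal, Hl].
Qed.

Lemma ball_card_ge_ext n c : ball_card_ge S n c -> ball_card_ge ext_gens n c.
Proof.
  intros [l [Hnd [Hl Hc]]]. exists (map (fun g => ((g, gone H) : GH)) l).
  split; [apply NoDup_horizontal, Hnd|]. split; [apply in_ball_horizontal, Hl|].
  rewrite length_map. exact Hc.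
Qed.

Lemma length_hs_pos : 0 < INR (length hs).
Proof.
  apply lt_0_INR. pose proof (in_hs (gone H)) as Hin.
  destruct hs as [|h l]; [destruct Hin | simpl; lia].
Qed.

(* The factor 2 leaves room for the strict inequality obtained by contraposition. *)
Lemma ball_card_ge_of_ext n c : 0 < c ->
  ball_card_ge ext_gens n c -> ball_card_ge S n (c / (2 * INR (length hs))).
Proof.
  intros Hc Hge. pose proof length_hs_pos as Hhs.
  apply NNPP. intro Hno.
  assert (Hle : ball_card_le S n (c / (2 * INR (length hs)))).
  { intros l Hnd Hl. apply Rnot_lt_le. intro Hlt. apply Hno. exists l. repeat split; auto. lra. }
  destruct Hge as [l [Hnd [Hl Hlen]]].
  pose proof (ball_card_le_ext _ _ Hle l Hnd Hl).
  assert (INR (length hs) * (c / (2 * INR (length hs))) = c / 2) by (field; lra).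
  lra.
Qed.

Lemma polynomial_growth_ext : polynomial_growth S -> polynomial_growth ext_gens.
Proof.
  intros [C [A [HC [HA Hball]]]]. pose proof length_hs_pos.
  exists (INR (length hs) * C), A. split; [apply Rmult_lt_0_compat; assumption|].
  split; [exact HA|]. intros n Hn. rewrite Rmult_assoc. apply ball_card_le_ext, Hball, Hn.
Qed.

Lemma homogeneous_dimension_ext D :
  homogeneous_dimension S D <-> homogeneous_dimension ext_gens D.
Proof.
  pose proof length_hs_pos. split; intros [C1 [C2 [H1 [H2 Hball]]]].
  - exists C1, (INR (length hs) * C2). split; [exact H1|].
    split; [apply Rmult_lt_0_compat; assumption|].
    intros n Hn. destruct (Hball n Hn) as [Hge Hle]. split; [apply ball_card_ge_ext, Hge|].
    rewrite Rmult_assoc. apply ball_card_le_ext, Hle.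
  - exists (C1 / (2 * INR (length hs))), C2. split; [apply Rdiv_lt_0_compat; lra|].
    split; [exact H2|]. intros n Hn. destruct (Hball n Hn) as [Hge Hle].
    split; [|apply ball_card_le_of_ext, Hle].
    assert (Hpow : 0 < powerRZ (INR n) D) by (apply powerRZ_lt, lt_0_INR; lia).
    replace (C1 / (2 * INR (length hs)) * powerRZ (INR n) D)
      with (C1 * powerRZ (INR n) D / (2 * INR (length hs))) by (field; lra).
    apply ball_card_ge_of_ext; [apply Rmult_lt_0_compat|]; assumption.
Qed.

End FiniteExtension.

Theorem lemma4p1 :
  forall (V : Type) (adj : V -> V -> Prop),
    is_graph adj -> bounded_geometry adj ->
  forall (G : group) (S : list G),
    fin_sym_gen_set S -> polynomial_growth S ->
  forall phi : V -> G,
    rough_isometry (gdist adj) (word_dist S) phi ->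
  exists (G' : group) (S' : list G'),
    fin_sym_gen_set S' /\ polynomial_growth S' /\
    (forall D : Z, homogeneous_dimension S D <-> homogeneous_dimension S' D) /\
    exists phi' : V -> G',
      (forall x y, phi' x = phi' y -> x = y) /\
      rough_isometry (gdist adj) (word_dist S') phi'.
Proof.
  intros V adj [_ [_ [Hconn _]]] Hbg G S HS Hpg phi [a [b Hphi]].
  destruct (rough_isometry_ab_bounded_fibres adj (word_dist S) phi a b
              Hconn Hbg (gdist_refl _) Hphi) as [N [ball [Hlen Hfib]]].
  destruct (fibre_labelling phi N ball Hlen Hfib) as [label [Hlabel_lt Hlabel_inj]].
  pose proof (in_zmod_enum N) as Henum.
  exists (prod_group G (cyclic_group N)), (ext_gens G (cyclic_group N) S (zmod_enum N)).
  split; [apply ext_gens_fin_sym_gen_set; assumption|].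
  split; [apply polynomial_growth_ext; assumption|].
  split; [intro D; apply homogeneous_dimension_ext; assumption|].
  exists (fun x => (phi x, zmod_of_nat N (label x))). split.
  - intros x y Exy. apply Hlabel_inj; [exact (f_equal fst Exy)|].
    pose proof (Hlabel_lt x). pose proof (Hlabel_lt y).
    apply (zmod_of_nat_inj N); [lia | lia | exact (f_equal snd Exy)].
  - exists a, (b + INR 1).
    apply (rough_isometry_ab_lift _ (word_dist S) _ phi _ fst); [exact Hphi | reflexivity|].
    intros z w. split; [apply word_dist_fst_le | apply word_dist_le_fst_succ]; assumption.
Qed.
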